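(* A normal mode transformation exists if and only if $\bm{\Omega}$ is positive definite.
   Context: Fix an integer $N\ge 1$, real numbers $v$ with $|v|<1$, $L>0$, $L_{\star}\ge 0$, an integer $M\ge 1$ and real coefficients $c_{1}=1,c_{2},\dots,c_{M}$. Let $F(k)=\sum_{i=1}^{M}(-1)^{i-1}c_{i}L_{\star}^{2i-2}k^{2i-1}$ and $k_{n}=n\pi/L$, and assume $F(k_{n})^{2}\neq v^{2}k_{n}^{2}$ for $n=1,\dots,N$. Put $u_{n}=\sqrt{|F(k_{n})^{2}-v^{2}k_{n}^{2}|}/k_{n}>0$, and $\varepsilon_{n}=1$ if $F(k_{n})^{2}-v^{2}k_{n}^{2}>0$, $\varepsilon_{n}=0$ otherwise. Define $N\times N$ matrices $\bm\sigma,\bm\rho,\bm\xi$ by $\sigma_{nn}=0$, $\sigma_{nm}=\dfrac{2iv\sqrt{nm}\,[1-(-1)^{n+m}]}{\pi\sqrt{u_{n}u_{m}}\,(m^{2}-n^{2})}$ for $n\neq m$, $\bm\rho=\mathrm{diag}(n u_{n}\varepsilon_{n})$, $\bm\xi=\mathrm{diag}(-n u_{n}(1-\varepsilon_{n}))$. With $\mathbf{I}$ the $N\times N$ identity, define the $2N\times 2N$ matrices $\bm{\Sigma}=\begin{pmatrix}\mathbf{I}&\mathbf{0}\\ \mathbf{0}&-\mathbf{I}\end{pmatrix}$, $\bm{\Gamma}=\begin{pmatrix}\mathbf{0}&\mathbf{I}\\ \mathbf{I}&\mathbf{0}\end{pmatrix}$, $\mathbf{R}=\bm{\Sigma}-\begin{pmatrix}\bm\sigma&\bm\sigma\\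 \bm\sigma&\bm\sigma\end{pmatrix}$, $\bm{\Omega}=\begin{pmatrix}\bm\rho&\bm\xi\\ \bm\xi&\bm\rho\end{pmatrix}$. Standing assumption: $\mathbf{R}$ is invertible. Let $\mathbf{D}=\mathbf{R}^{-1}\bm{\Omega}$. Here ${}^{*}$ denotes entrywise complex conjugation and ${}^{\mathrm{H}}$ the conjugate transpose. A normal mode transformation is a $2N\times2N$ matrix $\mathbf{T}$ such that (i) $\mathbf{T}^{\mathrm{H}}\mathbf{R}\mathbf{T}=\bm{\Sigma}$; (ii) $\mathbf{T}=\bm{\Gamma}\mathbf{T}^{*}\bm{\Gamma}$; (iii) $\mathbf{T}^{-1}\mathbf{D}\mathbf{T}=\mathrm{diag}(\mu_{1},\dots,\mu_{N},-\mu_{1},\dots,-\mu_{N})$ for some real numbers $\mu_{n}>0$, where $\mathbf{T}^{-1}=\bm{\Sigma}\mathbf{T}^{\mathrm{H}}\mathbf{R}$. *)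

From HB Require Import structures.
From mathcomp Require Import all_boot all_order all_algebra.
From mathcomp Require Import reals trigo.
From mathcomp Require Import complex.
Set Implicit Arguments. Unset Strict Implicit. Unset Printing Implicit Defensive.
Import Order.TTheory GRing.Theory Num.Theory.
Local Open Scope ring_scope.

Section Model.
Variable R : realType.
Local Notation C := (R[i]).

Definition toC (x : R) : C := Complex x 0.

Definition mxconj m n (A : 'M[C]_(m, n)) : 'M[C]_(m, n) := map_mx (@conjc R) A.
Definition mxH m n (A : 'M[C]_(m, n)) : 'M[C]_(n, m) := (mxconj A)^T.

Definition posdef n (A : 'M[C]_n) : Prop :=
  mxH A = A /\ forall x : 'cV[C]_n, x != 0 -> 0 < (mxH x *m A *m x) 0 0.

Definition Fk (Lstar : R) (M : nat) (c : nat -> R) (k : R) : R :=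
  \sum_(1 <= i < M.+1) (-1) ^+ (i - 1) * c i * Lstar ^+ (2 * i - 2) * k ^+ (2 * i - 1).

(** modes are indexed by i : 'I_N with n = i + 1 *)
Definition kn (L : R) (n : nat) : R := n%:R * pi / L.

Definition disc (v L Lstar : R) M c (n : nat) : R :=
  Fk Lstar M c (kn L n) ^+ 2 - v ^+ 2 * kn L n ^+ 2.

Definition un (v L Lstar : R) M c (n : nat) : R :=
  Num.sqrt `|disc v L Lstar M c n| / kn L n.

Definition epsn (v L Lstar : R) M c (n : nat) : R :=
  if 0 < disc v L Lstar M c n then 1 else 0.

Definition sigma_mx N (v L Lstar : R) M c : 'M[C]_N :=
  \matrix_(i < N, j < N)
    if i == j then 0 else
    let n := i.+1 in let m := j.+1 in
    'i * toC (2 * v * Num.sqrt ((n * m)%:R) * (1 - (-1) ^+ (n + m))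
         / (pi * Num.sqrt (un v L Lstar M c n * un v L Lstar M c m)
            * ((m ^ 2)%:R - (n ^ 2)%:R))).

Definition rho_mx N (v L Lstar : R) M c : 'M[C]_N :=
  diag_mx (\row_(i < N) toC (i.+1%:R * un v L Lstar M c i.+1 * epsn v L Lstar M c i.+1)).

Definition xi_mx N (v L Lstar : R) M c : 'M[C]_N :=
  diag_mx (\row_(i < N) toC (- (i.+1%:R * un v L Lstar M c i.+1 * (1 - epsn v L Lstar M c i.+1)))).

Definition Sigma_mx N : 'M[C]_(N + N) := block_mx 1%:M 0 0 (- 1%:M).
Definition Gamma_mx N : 'M[C]_(N + N) := block_mx 0 1%:M 1%:M 0.

Definition R_mx N (v L Lstar : R) M c : 'M[C]_(N + N) :=
  Sigma_mx N - block_mx (sigma_mx N v L Lstar M c) (sigma_mx N v L Lstar M c)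
                        (sigma_mx N v L Lstar M c) (sigma_mx N v L Lstar M c).

Definition Omega_mx N (v L Lstar : R) M c : 'M[C]_(N + N) :=
  block_mx (rho_mx N v L Lstar M c) (xi_mx N v L Lstar M c)
           (xi_mx N v L Lstar M c) (rho_mx N v L Lstar M c).

Definition D_mx N (v L Lstar : R) M c : 'M[C]_(N + N) :=
  invmx (R_mx N v L Lstar M c) *m Omega_mx N v L Lstar M c.

Definition normal_mode_transformation N (v L Lstar : R) M c (T : 'M[C]_(N + N)) : Prop :=
  [/\ mxH T *m R_mx N v L Lstar M c *m T = Sigma_mx N,
      T = Gamma_mx N *m mxconj T *m Gamma_mx N &
      exists mu : 'I_N -> R, (forall i, 0 < mu i) /\
        invmx T *m D_mx N v L Lstar M c *m T
        = diag_mx (row_mx (\row_(i < N) toC (mu i)) (\row_(i < N) toC (- mu i)))].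

End Model.
Arguments normal_mode_transformation {R} N v L Lstar M c T.

From HB Require Import structures.
From mathcomp Require Import all_boot all_order all_algebra.
From mathcomp Require Import reals trigo.
From mathcomp Require Import complex.
From mathcomp Require Import sesquilinear spectral zify lra.
Set Implicit Arguments. Unset Strict Implicit. Unset Printing Implicit Defensive.
Import Order.TTheory GRing.Theory Num.Theory.
Local Open Scope ring_scope.

(* If T is a normal mode transformation, (i) and (iii) give
   T^H Omega T = Sigma diag(mu, -mu) = diag(mu, mu), so Omega is congruent to a
   positive diagonal matrix.  Conversely, testing Omega on e_n + e_(N+n) shows
   that positivity forces every disc n > 0, i.e. Omega = diag(a, a) with a > 0.
   With P = Omega^(-1/2), the matrix K = P R P is Hermitian, invertible and
   satisfies Gamma K^* Gamma = -K, so v |-> Gamma v^* maps lam-eigenvectors of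
   K to (-lam)-eigenvectors.  In an orthonormal eigenbasis this symmetry is a
   unitary matrix coupling only eigenvalues of opposite signs, hence K has
   exactly N positive eigenvalues s.  Their eigenvectors V, completed by
   Gamma V^*, form a Gamma-symmetric unitary U2 with K U2 = U2 diag(s, -s), and
   T = P U2 diag(s, s)^(-1/2) is a normal mode transformation with mu = 1/s. *)

Section ConjugateTranspose.
Variable R : realType.
Local Notation C := R[i].

Lemma mxconjK m n (A : 'M[C]_(m, n)) : mxconj (mxconj A) = A.
Proof. by apply/matrixP=> i j; rewrite !mxE conjcK. Qed.

Lemma mxconjM m n p (A : 'M[C]_(m, n)) (B : 'M[C]_(n, p)) :
  mxconj (A *m B) = mxconj A *m mxconj B.
Proof. exact: map_mxM. Qed.

Lemma mxconjD m n (A B : 'M[C]_(m, n)) : mxconj (A + B) = mxconj A + mxconj B.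
Proof. exact: map_mxD. Qed.

Lemma mxconjN m n (A : 'M[C]_(m, n)) : mxconj (- A) = - mxconj A.
Proof. exact: map_mxN. Qed.

Lemma mxconj0 m n : mxconj (0 : 'M[C]_(m, n)) = 0.
Proof. exact: map_mx0. Qed.

Lemma mxconj1 n : mxconj (1%:M : 'M[C]_n) = 1%:M.
Proof. exact: map_mx1. Qed.

Lemma mxconj_row m n1 n2 (A : 'M[C]_(m, n1)) (B : 'M[C]_(m, n2)) :
  mxconj (row_mx A B) = row_mx (mxconj A) (mxconj B).
Proof. exact: map_row_mx. Qed.

Lemma mxconj_block m1 m2 n1 n2 (A : 'M[C]_(m1, n1)) (B : 'M[C]_(m1, n2))
    (A' : 'M[C]_(m2, n1)) (B' : 'M[C]_(m2, n2)) :
  mxconj (block_mx A B A' B') =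
  block_mx (mxconj A) (mxconj B) (mxconj A') (mxconj B').
Proof. exact: map_block_mx. Qed.

Lemma mxconj_diag n (d : 'rV[C]_n) : mxconj (diag_mx d) = diag_mx (mxconj d).
Proof. exact: map_diag_mx. Qed.

Lemma mxH_mul m n p (A : 'M[C]_(m, n)) (B : 'M[C]_(n, p)) :
  mxH (A *m B) = mxH B *m mxH A.
Proof. by rewrite /mxH mxconjM trmx_mul. Qed.

Lemma mxHK m n (A : 'M[C]_(m, n)) : mxH (mxH A) = A.
Proof. by apply/matrixP=> i j; rewrite !mxE conjcK. Qed.

Lemma mxHD m n (A B : 'M[C]_(m, n)) : mxH (A + B) = mxH A + mxH B.
Proof. by rewrite /mxH mxconjD linearD. Qed.

Lemma mxHN m n (A : 'M[C]_(m, n)) : mxH (- A) = - mxH A.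
Proof. by rewrite /mxH mxconjN linearN. Qed.

Lemma mxH0 m n : mxH (0 : 'M[C]_(m, n)) = 0.
Proof. by rewrite /mxH mxconj0 trmx0. Qed.

Lemma mxH1 n : mxH (1%:M : 'M[C]_n) = 1%:M.
Proof. by rewrite /mxH mxconj1 trmx1. Qed.

Lemma mxH_conj m n (A : 'M[C]_(m, n)) : mxH (mxconj A) = A^T.
Proof. by rewrite /mxH mxconjK. Qed.

Lemma mxconj_H m n (A : 'M[C]_(m, n)) : mxconj (mxH A) = A^T.
Proof. by apply/matrixP=> i j; rewrite !mxE conjcK. Qed.

Lemma mxH_tr m n (A : 'M[C]_(m, n)) : mxH A^T = mxconj A.
Proof. by apply/matrixP=> i j; rewrite !mxE. Qed.

Lemma mxH_row m n1 n2 (A : 'M[C]_(m, n1)) (B : 'M[C]_(m, n2)) :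
  mxH (row_mx A B) = col_mx (mxH A) (mxH B).
Proof. by rewrite /mxH mxconj_row tr_row_mx. Qed.

Lemma mxH_block m1 m2 n1 n2 (A : 'M[C]_(m1, n1)) (B : 'M[C]_(m1, n2))
    (A' : 'M[C]_(m2, n1)) (B' : 'M[C]_(m2, n2)) :
  mxH (block_mx A B A' B') = block_mx (mxH A) (mxH A') (mxH B) (mxH B').
Proof. by rewrite /mxH mxconj_block tr_block_mx. Qed.

Lemma mxH_diag n (d : 'rV[C]_n) : mxH (diag_mx d) = diag_mx (mxconj d).
Proof. by rewrite /mxH mxconj_diag tr_diag_mx. Qed.

Lemma mxconj_mxsub m1 n1 m2 n2 (f : 'I_m2 -> 'I_m1) (g : 'I_n2 -> 'I_n1)
    (A : 'M[C]_(m1, n1)) :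
  mxconj (mxsub f g A) = mxsub f g (mxconj A).
Proof. exact: map_mxsub. Qed.

Lemma mxH_mxsub m1 n1 m2 n2 (f : 'I_m2 -> 'I_m1) (g : 'I_n2 -> 'I_n1)
    (A : 'M[C]_(m1, n1)) :
  mxH (mxsub f g A) = mxsub g f (mxH A).
Proof. by apply/matrixP=> i j; rewrite !mxE. Qed.

Lemma mxH_map_conj m n (A : 'M[C]_(m, n)) : mxH A = map_mx Num.conj A^T.
Proof. by apply/matrixP=> i j; rewrite !mxE. Qed.

End ConjugateTranspose.

Section PositiveDefinite.
Variable R : realType.
Local Notation C := R[i].

Lemma mxconj_pos n (d : 'rV[C]_n) : (forall i, 0 < d 0 i) -> mxconj d = d.
Proof. by move=> dpos; apply/rowP=> i; rewrite mxE; apply/geC0_conj/ltW. Qed.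

Lemma posdef_diag_mx n (d : 'rV[C]_n) : (forall i, 0 < d 0 i) -> posdef (diag_mx d).
Proof.
move=> dpos; split; first by rewrite mxH_diag mxconj_pos.
move=> y /eqP ynz; have /existsP [i0 yi0] : [exists i, y i 0 != 0].
  apply: contraT => /existsPn y0; exfalso; apply: ynz.
  by apply/matrixP=> i j; rewrite ord1 mxE; apply/eqP/negPn/y0.
have termE i : (mxH y *m diag_mx d) 0 i * y i 0 = d 0 i * (y i 0 * conjc (y i 0)).
  by rewrite mul_mx_diag !mxE mulrAC mulrC (mulrC (y i 0)).
rewrite mxE (bigD1 i0) //= termE; apply: ltr_wpDr; last first.
  by rewrite mulr_gt0 ?mul_conjC_gt0.
by apply: sumr_ge0 => i _; rewrite termE mulr_ge0 ?mul_conjC_ge0 ?ltW.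
Qed.

Lemma posdef_congr n (A T : 'M[C]_n) :
  T \in unitmx -> posdef A -> posdef (mxH T *m A *m T).
Proof.
move=> Tu [AH Apos]; split; first by rewrite !mxH_mul mxHK AH mulmxA.
move=> x xnz; rewrite !mulmxA -mxH_mul -mulmxA.
by apply: Apos; apply: contra xnz => /eqP/(congr1 (mulmx (invmx T))); rewrite mulKmx // mulmx0 => ->.
Qed.

Lemma mxH_delta n (i : 'I_n) : mxH (delta_mx i 0 : 'cV[C]_n) = delta_mx 0 i.
Proof. by apply/matrixP=> a b; rewrite !mxE rmorph_nat andbC. Qed.

Lemma quad_delta_mx n (A : 'M[C]_n) i j :
  mxH (delta_mx i 0 : 'cV[C]_n) *m A *m delta_mx j 0 = (A i j)%:M.
Proof.
apply/matrixP=> a b; rewrite !ord1 mxH_delta -rowE -colE !mxE.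
by rewrite eqxx mulr1n.
Qed.

Lemma posdef_pair n (A : 'M[C]_n) i j : posdef A -> i != j ->
  0 < A i i + A i j + A j i + A j j.
Proof.
move=> [_ Apos] ij; pose x : 'cV[C]_n := delta_mx i 0 + delta_mx j 0.
have /Apos : x != 0.
  apply/negP=> /eqP/matrixP/(_ i 0); rewrite !mxE !eqxx (negbTE ij) /=.
  by move/eqP; rewrite addr0 oner_eq0.
rewrite /x mxHD !mulmxDl !mulmxDr !quad_delta_mx !mxE !eqxx !mulr1n.
by rewrite !addrA.
Qed.

End PositiveDefinite.

Section RealEmbedding.
Variable R : realType.

Lemma toC_gt0 (x : R) : (0 < toC x) = (0 < x).
Proof. by rewrite ltcE /= eqxx. Qed.

Lemma toCD (x y : R) : toC (x + y) = toC x + toC y.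
Proof. by apply/eqP; rewrite eq_complex /= addr0 !eqxx. Qed.

Lemma toCN (x : R) : toC (- x) = - toC x.
Proof. by rewrite /toC; congr Complex; rewrite oppr0. Qed.

Lemma conjc_itoC (x : R) : conjc ('i * toC x) = - ('i * toC x).
Proof. by apply/eqP; rewrite eq_complex /= mul0r mulr0 subrr oppr0 !eqxx. Qed.

End RealEmbedding.

Section PositiveRows.
Variables (R : realType) (n : nat).
Local Notation C := R[i].

Definition invsqrt_row (a : 'rV[C]_n) : 'rV[C]_n := \row_k (sqrtC (a 0 k))^-1.

Lemma invsqrt_row_gt0 (a : 'rV[C]_n) k : 0 < a 0 k -> 0 < invsqrt_row a 0 k.
Proof. by move=> ak; rewrite mxE invr_gt0 sqrtC_gt0. Qed.

Lemma invsqrtC_mulK (x : C) : 0 < x -> (sqrtC x)^-1 * x * (sqrtC x)^-1 = 1.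
Proof.
move=> x_gt0; have sx : sqrtC x != 0 by rewrite gt_eqF ?sqrtC_gt0.
by rewrite -{2}(sqrtCK x) expr2 mulrA mulVf // mul1r divff.
Qed.

Lemma pos_row_toC (m : 'rV[C]_n) : (forall k, 0 < m 0 k) ->
  exists2 mu : 'I_n -> R, (forall k, 0 < mu k) & m = \row_k toC (mu k).
Proof.
move=> mpos; exists (fun k => complex.Re (m 0 k)) => [k|].
  by have := mpos k; case: (m 0 k) => x y; rewrite ltcE => /andP[].
apply/rowP=> k; rewrite mxE; have := mpos k.
by case: (m 0 k) => x y; rewrite ltcE /= => /andP[/eqP-> _].
Qed.

End PositiveRows.

Section BlockSymmetries.
Variables (R : realType) (N : nat).
Local Notation C := R[i].
Local Notation Gamma := (Gamma_mx R N).
Local Notation Sigma := (Sigma_mx R N).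

Definition dup_diag (a : 'rV[C]_N) : 'M[C]_(N + N) := diag_mx (row_mx a a).

Lemma Gamma_mx_sqr : Gamma *m Gamma = 1%:M.
Proof.
rewrite /Gamma_mx mulmx_block !mulmx0 !mul0mx !mulmx1 !addr0 !add0r.
by rewrite -scalar_mx_block.
Qed.

Lemma mxconj_Gamma : mxconj Gamma = Gamma.
Proof. by rewrite /Gamma_mx mxconj_block mxconj0 mxconj1. Qed.

Lemma mxH_Gamma : mxH Gamma = Gamma.
Proof. by rewrite /Gamma_mx mxH_block mxH0 mxH1. Qed.

Lemma row_mx_Gamma m (A B : 'M[C]_(m, N)) : row_mx A B *m Gamma = row_mx B A.
Proof. by rewrite /Gamma_mx mul_row_block !mulmx0 !mulmx1 addr0 add0r. Qed.

Lemma Gamma_block_Gamma (A B A' B' : 'M[C]_N) :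
  Gamma *m block_mx A B A' B' *m Gamma = block_mx B' A' B A.
Proof.
by rewrite /Gamma_mx !mulmx_block !mulmx0 !mul0mx !mulmx1 !mul1mx !addr0 !add0r.
Qed.

Lemma Gamma_dup_diag (a : 'rV[C]_N) : Gamma *m dup_diag a = dup_diag a *m Gamma.
Proof.
rewrite /Gamma_mx /dup_diag diag_mx_row !mulmx_block !mulmx0 !mul0mx.
by rewrite !mulmx1 !mul1mx !addr0 !add0r.
Qed.

Lemma mxconj_dup_diag (a : 'rV[C]_N) :
  mxconj a = a -> mxconj (dup_diag a) = dup_diag a.
Proof. by move=> ac; rewrite mxconj_diag mxconj_row ac. Qed.

Lemma mxH_dup_diag (a : 'rV[C]_N) : mxconj a = a -> mxH (dup_diag a) = dup_diag a.
Proof. by move=> ac; rewrite mxH_diag mxconj_row ac. Qed.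

Lemma Sigma_mx_sqr : Sigma *m Sigma = 1%:M.
Proof.
rewrite /Sigma_mx mulmx_block !mulmx0 !mul0mx !addr0 !add0r mulmx1 mulNmx mulmxN.
by rewrite opprK mulmx1 -scalar_mx_block.
Qed.

Lemma mxconj_Sigma : mxconj Sigma = Sigma.
Proof. by rewrite /Sigma_mx mxconj_block mxconj0 mxconjN mxconj1. Qed.

Lemma mxH_Sigma : mxH Sigma = Sigma.
Proof. by rewrite /Sigma_mx mxH_block mxH0 mxHN mxH1. Qed.

Lemma Sigma_diag : Sigma = diag_mx (row_mx (const_mx 1) (const_mx (-1))).
Proof.
rewrite /Sigma_mx diag_mx_row !diag_const_mx; congr block_mx.
by apply/matrixP=> i j; rewrite !mxE mulNrn.
Qed.

Lemma mul_diag_row_mx (a b a' b' : 'rV[C]_N) :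
  diag_mx (row_mx a b) *m diag_mx (row_mx a' b') =
  diag_mx (row_mx (\row_k (a 0 k * a' 0 k)) (\row_k (b 0 k * b' 0 k))).
Proof.
rewrite mulmx_diag; congr diag_mx; apply/rowP=> k.
by case: (split_ordP k) => j ->; rewrite [LHS]mxE ?row_mxEl ?row_mxEr !mxE.
Qed.

Lemma Gamma_conj_Sigma_sub_block (S : 'M[C]_N) : mxconj S = - S ->
  Gamma *m mxconj (Sigma - block_mx S S S S) *m Gamma = - (Sigma - block_mx S S S S).
Proof.
move=> Sc; rewrite mxconjD mxconjN mxconj_Sigma mxconj_block Sc.
rewrite mulmxDr mulmxDl mulmxN mulNmx /Sigma_mx !Gamma_block_Gamma.
rewrite !opp_block_mx !add_block_mx !opp_block_mx !opprK.
by rewrite !opprD !opprK oppr0.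
Qed.

Lemma dup_diag_invsqrtK (a : 'rV[C]_N) : (forall k, 0 < a 0 k) ->
  dup_diag (invsqrt_row a) *m dup_diag a *m dup_diag (invsqrt_row a) = 1%:M.
Proof.
move=> apos; rewrite /dup_diag !mul_diag_row_mx -[1%:M]diag_const_mx.
congr diag_mx; apply/rowP=> k; rewrite [RHS]mxE.
by case: (split_ordP k) => j ->; rewrite ?row_mxEl ?row_mxEr !mxE invsqrtC_mulK.
Qed.

Lemma pm_diag_invsqrtK (s : 'rV[C]_N) : (forall k, 0 < s 0 k) ->
  dup_diag (invsqrt_row s) *m diag_mx (row_mx s (- s)) *m dup_diag (invsqrt_row s)
  = Sigma.
Proof.
move=> spos; rewrite /dup_diag !mul_diag_row_mx Sigma_diag.
by congr (diag_mx (row_mx _ _)); apply/rowP=> k; rewrite !mxE ?mulrN ?mulNr invsqrtC_mulK.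
Qed.

Lemma Sigma_pm_diag (d : 'rV[C]_N) : Sigma *m diag_mx (row_mx d (- d)) = dup_diag d.
Proof.
rewrite Sigma_diag mul_diag_row_mx.
by congr (diag_mx (row_mx _ _)); apply/rowP=> k; rewrite !mxE ?mul1r // mulN1r opprK.
Qed.

Lemma unitmx_of_congr_Sigma (A T : 'M[C]_(N + N)) :
  mxH T *m A *m T = Sigma -> T \in unitmx.
Proof.
move=> TAT; have : Sigma \in unitmx by case: (mulmx1_unit Sigma_mx_sqr).
by rewrite -TAT !unitmx_mul => /andP[].
Qed.

Lemma pm_diag_dup_diag_inv (s b : 'rV[C]_N) : (forall k, s 0 k != 0) ->
  let s' := \row_k (s 0 k)^-1 in
  diag_mx (row_mx s (- s)) *m dup_diag b *m diag_mx (row_mx s' (- s')) = dup_diag b.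
Proof.
move=> s_neq0 s'; rewrite /dup_diag !mul_diag_row_mx.
by congr (diag_mx (row_mx _ _)); apply/rowP=> k; rewrite !mxE ?mulrN ?mulNr ?opprK
  mulrAC divff ?mul1r.
Qed.

End BlockSymmetries.

Lemma card_unitary_offdiag (R : realType) n (M : 'M[R[i]]_n) (A : {set 'I_n}) :
  M *m mxH M = 1%:M -> (forall j k, (j \in A) = (k \in A) -> M j k = 0) ->
  #|A| = #|~: A|.
Proof.
move=> MU M0; pose q j k := M j k * conjc (M j k).
have rowq j : \sum_k q j k = 1.
  have := congr1 (fun X : 'M[R[i]]_n => X j j) MU; rewrite !mxE eqxx mulr1n => <-.
  by apply: eq_bigr => k _; rewrite !mxE.
have colq k : \sum_j q j k = 1.
  have := congr1 (fun X : 'M[R[i]]_n => X k k) (mulmx1C MU); rewrite !mxE eqxx mulr1n => <-.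
  by apply: eq_bigr => j _; rewrite !mxE mulrC.
have q0 j k : (j \in A) = (k \in A) -> q j k = 0 by move/M0; rewrite /q => ->; rewrite mul0r.
suff : (#|A|%:R : R[i]) = #|~: A|%:R by move/eqP; rewrite eqr_nat => /eqP.
rewrite -!sumr_const; transitivity (\sum_(j in A) \sum_(k in ~: A) q j k).
  apply: eq_bigr => j jA; rewrite -(rowq j) (bigID (mem A)) /= big1 ?add0r.
    by apply: eq_bigl => k; rewrite in_setC.
  by move=> k kA; apply: q0; rewrite jA.
rewrite exchange_big; apply: eq_bigr => k; rewrite in_setC => /negbTE kA.
rewrite -(colq k) [RHS](bigID (mem A)) /= [X in _ = _ + X]big1 ?addr0 //.
by move=> j /negbTE jA; apply: q0; rewrite jA kA.
Qed.

Lemma diag_anticomm_entry (F : comPzRingType) n (M : 'M[F]_n) (d : 'rV[F]_n) j k :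
  M *m diag_mx d = - (diag_mx d *m M) -> (d 0 j + d 0 k) * M j k = 0.
Proof.
move/matrixP/(_ j k)/eqP; rewrite mul_mx_diag mul_diag_mx !mxE -addr_eq0.
by rewrite mulrDl addrC (mulrC (d 0 k)) => /eqP.
Qed.

Lemma hermitian_spectral (R : realType) n (K : 'M[R[i]]_n) : mxH K = K ->
  exists (U : 'M[R[i]]_n) (lam : 'rV[R[i]]_n),
    [/\ U *m mxH U = 1%:M, mxconj lam = lam & K = mxH U *m diag_mx lam *m U].
Proof.
move=> KH; have Kherm : K \is hermsymmx.
  by apply/is_hermitianmxP; rewrite expr0 scale1r -mxH_map_conj KH.
have /orthomx_spectralP Keq := hermitian_normalmx Kherm.
have lam_real := hermitian_spectral_diag_real Kherm.
have Uunitary := spectral_unitarymx K.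
exists (spectralmx K), (spectral_diag K); split.
- by move/unitarymxP: Uunitary; rewrite mxH_map_conj.
- by apply/rowP=> j; rewrite mxE; apply/CrealP; move/mxOverP: lam_real; apply.
- by rewrite [LHS]Keq (invmx_unitary Uunitary) -mxH_map_conj.
Qed.

Section ParticleHoleSpectrum.
Variables (R : realType) (N : nat) (K : 'M[R[i]]_(N + N)).
Local Notation C := R[i].
Local Notation Gamma := (Gamma_mx R N).
Hypothesis K_Gamma : Gamma *m mxconj K *m Gamma = - K.

Lemma Gamma_completion (V : 'M[C]_(N + N, N)) (s : 'rV[C]_N) :
    mxconj s = s -> mxH V *m V = 1%:M -> mxH V *m Gamma *m mxconj V = 0 ->
    K *m V = V *m diag_mx s ->
  let U2 := row_mx V (Gamma *m mxconj V) in
  [/\ mxH U2 *m U2 = 1%:M, K *m U2 = U2 *m diag_mx (row_mx s (- s))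
    & Gamma *m mxconj U2 *m Gamma = U2].
Proof.
move=> sc VV VGV KV U2.
have KG : K *m Gamma = - (Gamma *m mxconj K).
  by rewrite -[K in LHS]opprK -K_Gamma mulNmx -(mulmxA _ Gamma) Gamma_mx_sqr mulmx1.
have VtGV : V^T *m Gamma *m V = 0.
  by rewrite -mxconj_H -[V in _ *m V]mxconjK -mxconj_Gamma -!mxconjM VGV mxconj0.
have VtV : V^T *m Gamma *m (Gamma *m mxconj V) = 1%:M.
  by rewrite -mulmxA (mulmxA Gamma) Gamma_mx_sqr mul1mx -mxconj_H -mxconjM VV mxconj1.
split.
- rewrite mxH_row mul_col_row VV mulmxA VGV mxH_mul mxH_conj mxH_Gamma VtGV VtV.
  by rewrite -scalar_mx_block.
- rewrite mul_mx_row diag_mx_row mul_row_block !mulmx0 addr0 add0r KV; congr row_mx.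
  rewrite mulmxA KG mulNmx -(mulmxA Gamma (mxconj K)) -mxconjM KV mxconjM mxconj_diag sc.
  have -> : diag_mx (- s) = - diag_mx s by apply/matrixP=> i j; rewrite !mxE mulNrn.
  by rewrite mulmxN !mulmxA.
- rewrite mxconj_row mxconjM mxconj_Gamma mxconjK mul_mx_row mulmxA Gamma_mx_sqr.
  by rewrite mul1mx row_mx_Gamma.
Qed.

Hypotheses (KH : mxH K = K) (K_unit : K \in unitmx).

Section Eigenvectors.
Variables (U : 'M[C]_(N + N)) (lam : 'rV[C]_(N + N)).
Hypotheses (UU : U *m mxH U = 1%:M) (lam_real : mxconj lam = lam)
  (K_eq : K = mxH U *m diag_mx lam *m U).

Lemma spectrum_neq0 j : lam 0 j != 0.
Proof.
apply: contraTneq K_unit => lam0.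
by rewrite unitmxE K_eq !det_mulmx det_diag (bigD1 j) //= lam0 !(mul0r, mulr0) unitr0.
Qed.

(* The antiunitary map [v |-> Gamma v^*], written in the eigenbasis [U]; it sends
   [lam]-eigenvectors of [K] to [-lam]-eigenvectors. *)
Let GammaU := U *m Gamma *m U^T.

Lemma GammaU_unitary : GammaU *m mxH GammaU = 1%:M.
Proof.
have UtU : U^T *m mxconj U = 1%:M.
  by rewrite -mxconj_H -mxconjM (mulmx1C UU) mxconj1.
rewrite /GammaU !mxH_mul mxH_Gamma mxH_tr !mulmxA -(mulmxA _ U^T) UtU mulmx1.
by rewrite -(mulmxA U) Gamma_mx_sqr mulmx1 UU.
Qed.

Lemma GammaU_anticomm : GammaU *m diag_mx lam = - (diag_mx lam *m GammaU).
Proof.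
have UK : U *m K = diag_mx lam *m U by rewrite K_eq !mulmxA UU mul1mx.
have Kc : mxconj K = U^T *m diag_mx lam *m mxconj U.
  by rewrite [in LHS]K_eq !mxconjM mxconj_H mxconj_diag lam_real.
have GlG : GammaU *m diag_mx lam *m mxH GammaU = - diag_mx lam.
  transitivity (U *m (Gamma *m mxconj K *m Gamma) *m mxH U).
    by rewrite Kc /GammaU !mxH_mul mxH_Gamma mxH_tr !mulmxA.
  by rewrite K_Gamma mulmxN mulNmx UK -mulmxA UU mulmx1.
by rewrite -[LHS]mulmx1 -(mulmx1C GammaU_unitary) mulmxA GlG mulNmx.
Qed.

Lemma GammaU_eq0 j k : (0 < lam 0 j) = (0 < lam 0 k) -> GammaU j k = 0.
Proof.
have lam_lt0 l : ~~ (0 < lam 0 l) -> lam 0 l < 0.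
  have lam_re : lam 0 l \is Num.real.
    by apply/CrealP; have /rowP/(_ l) := lam_real; rewrite mxE.
  by move=> /negbTE l0; have := spectrum_neq0 l; rewrite real_neqr_lt ?l0 ?orbF.
move=> sgn; have /eqP := diag_anticomm_entry j k GammaU_anticomm.
rewrite mulf_eq0 => /orP[|/eqP //]; apply: contraTeq => _.
case: (boolP (0 < lam 0 j)) sgn => [lj /esym lk | /lam_lt0 lj /esym/negbT/lam_lt0 lk].
  by rewrite gt_eqF ?addr_gt0.
by rewrite lt_eqF // -oppr_gt0 opprD addr_gt0 ?oppr_gt0.
Qed.

Lemma card_spectrum_gt0 : #|[set j | 0 < lam 0 j]| = N.
Proof.
set A := [set j | 0 < lam 0 j].
have cardAC : #|A| = #|~: A|.
  by apply: (card_unitary_offdiag GammaU_unitary) => j k; rewrite !inE => /GammaU_eq0.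
by have := cardsC A; rewrite card_ord -cardAC; lia.
Qed.

Lemma eigenbasis_of_spectrum : exists (U2 : 'M[C]_(N + N)) (s : 'rV[C]_N),
  [/\ forall k, 0 < s 0 k, mxH U2 *m U2 = 1%:M,
      K *m U2 = U2 *m diag_mx (row_mx s (- s)) & Gamma *m mxconj U2 *m Gamma = U2].
Proof.
have [f f_inj f_pos] : exists2 f : 'I_N -> 'I_(N + N),
    injective f & forall k, 0 < lam 0 (f k).
  pose e := cast_ord (esym card_spectrum_gt0).
  exists (fun k => enum_val (e k)) => [a b /enum_val_inj /cast_ord_inj //|k].
  by have := enum_valP (e k); rewrite inE.
pose V := colsub f (mxH U); pose s := \row_k lam 0 (f k).
have VH : mxH V = rowsub f U by rewrite mxH_mxsub mxHK.
have [] := Gamma_completion (V := V) (s := s).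
- by apply/rowP=> k; have /rowP/(_ (f k)) := lam_real; rewrite !mxE.
- by rewrite VH -mxsub_mul UU; apply/matrixP=> a b; rewrite !mxE (inj_eq f_inj).
- rewrite VH mul_rowsub_mx mxconj_mxsub mxconj_H -mxsub_mul.
  by apply/matrixP=> a b; rewrite [LHS]mxE [RHS]mxE; apply: GammaU_eq0; rewrite !f_pos.
- have KUh : K *m mxH U = mxH U *m diag_mx lam by rewrite K_eq -!mulmxA UU mulmx1.
  rewrite mulmx_colsub KUh; apply/matrixP=> i k.
  by rewrite !mul_mx_diag !mxE.
move=> U2U KU2 U2G; exists (row_mx V (Gamma *m mxconj V)), s; split=> // k.
by rewrite mxE f_pos.
Qed.

End Eigenvectors.

Lemma particle_hole_eigenbasis : exists (U2 : 'M[C]_(N + N)) (s : 'rV[C]_N),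
  [/\ forall k, 0 < s 0 k, mxH U2 *m U2 = 1%:M,
      K *m U2 = U2 *m diag_mx (row_mx s (- s)) & Gamma *m mxconj U2 *m Gamma = U2].
Proof.
have [U [lam [UU lam_real K_eq]]] := hermitian_spectral KH.
exact: eigenbasis_of_spectrum UU lam_real K_eq.
Qed.

End ParticleHoleSpectrum.

Lemma pencil_diag (F : comUnitRingType) n (Rm Om T : 'M[F]_n) (d : 'rV[F]_n) :
  Rm \in unitmx -> T \in unitmx -> Om *m T = Rm *m T *m diag_mx d ->
  invmx T *m (invmx Rm *m Om) *m T = diag_mx d.
Proof.
move=> Rm_unit T_unit OmT.
by rewrite -mulmxA -(mulmxA (invmx Rm)) OmT -!mulmxA (mulKmx Rm_unit) (mulKmx T_unit).
Qed.

Section NormalModeConstruction.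
Variables (R : realType) (N : nat) (Rm : 'M[R[i]]_(N + N)) (a : 'rV[R[i]]_N).
Local Notation C := R[i].
Local Notation Gamma := (Gamma_mx R N).
Local Notation Sigma := (Sigma_mx R N).
Hypotheses (a_gt0 : forall k, 0 < a 0 k) (RmH : mxH Rm = Rm) (Rm_unit : Rm \in unitmx)
  (Rm_Gamma : Gamma *m mxconj Rm *m Gamma = - Rm).

Let P := dup_diag (invsqrt_row a).

Let p_real : mxconj (invsqrt_row a) = invsqrt_row a.
Proof. by apply: mxconj_pos => k; apply: invsqrt_row_gt0. Qed.

Let P_real : mxconj P = P := mxconj_dup_diag p_real.

Let PH : mxH P = P := mxH_dup_diag p_real.

Let PaP : P *m dup_diag a *m P = 1%:M := dup_diag_invsqrtK a_gt0.

Let P_unit : P \in unitmx.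
Proof. exact: (mulmx1_unit PaP).2. Qed.

Let PG : Gamma *m P = P *m Gamma := Gamma_dup_diag _.

Let K := P *m Rm *m P.

Let KH : mxH K = K.
Proof. by rewrite /K !mxH_mul PH RmH mulmxA. Qed.

Let K_unit : K \in unitmx.
Proof. by rewrite !unitmx_mul P_unit Rm_unit. Qed.

Let K_Gamma : Gamma *m mxconj K *m Gamma = - K.
Proof.
have -> : Gamma *m mxconj K *m Gamma = P *m (Gamma *m mxconj Rm *m Gamma) *m P.
  by rewrite /K !mxconjM P_real !mulmxA PG -!mulmxA PG.
by rewrite Rm_Gamma mulmxN mulNmx.
Qed.

Lemma normal_mode_of_dup_diag : exists T : 'M[C]_(N + N),
  [/\ mxH T *m Rm *m T = Sigma, T = Gamma *m mxconj T *m Gamma &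
      exists mu : 'I_N -> R, (forall i, 0 < mu i) /\
        invmx T *m (invmx Rm *m dup_diag a) *m T
        = diag_mx (row_mx (\row_(i < N) toC (mu i)) (\row_(i < N) toC (- mu i)))].
Proof.
have [U2 [s [s_gt0 U2U KU2 U2G]]] := particle_hole_eigenbasis K_Gamma KH K_unit.
pose G := dup_diag (invsqrt_row s).
have g_real : mxconj (invsqrt_row s) = invsqrt_row s.
  by apply: mxconj_pos => k; apply: invsqrt_row_gt0.
have G_real : mxconj G = G := mxconj_dup_diag g_real.
have GH : mxH G = G := mxH_dup_diag g_real.
pose m := \row_k (s 0 k)^-1.
have [mu mu_gt0 m_eq] : exists2 mu : 'I_N -> R, (forall k, 0 < mu k) & m = \row_k toC (mu k).
  by apply: pos_row_toC => k; rewrite mxE invr_gt0.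
set T := P *m U2 *m G.
have TRT : mxH T *m Rm *m T = Sigma.
  rewrite /T !mxH_mul PH GH !mulmxA -(mulmxA _ P Rm) -(mulmxA _ _ P) -/K.
  rewrite -(mulmxA _ K U2) KU2 (mulmxA _ U2) -(mulmxA G) U2U mulmx1.
  exact: pm_diag_invsqrtK.
have T_unit := unitmx_of_congr_Sigma TRT.
exists T; split=> //.
  rewrite /T !mxconjM P_real G_real.
  have -> : Gamma *m (P *m mxconj U2 *m G) *m Gamma
      = P *m (Gamma *m mxconj U2 *m Gamma) *m G.
    by rewrite !mulmxA PG -!mulmxA Gamma_dup_diag.
  by rewrite U2G.
exists mu; split=> //.
have -> : row_mx (\row_i toC (mu i)) (\row_i toC (- mu i)) = row_mx m (- m).
  by rewrite m_eq; congr row_mx; apply/rowP=> k; rewrite !mxE toCN.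
apply: pencil_diag => //; apply: (can_inj (mulKmx P_unit)).
rewrite /T !mulmxA PaP mul1mx -/K KU2 -!mulmxA (mulmxA (diag_mx _) G).
by rewrite pm_diag_dup_diag_inv // => k; rewrite gt_eqF.
Qed.

End NormalModeConstruction.

Lemma posdef_of_normal_mode (R : realType) N (Rm Om T : 'M[R[i]]_(N + N))
    (mu : 'I_N -> R) :
  Rm \in unitmx -> mxH T *m Rm *m T = Sigma_mx R N -> (forall i, 0 < mu i) ->
  invmx T *m (invmx Rm *m Om) *m T
    = diag_mx (row_mx (\row_(i < N) toC (mu i)) (\row_(i < N) toC (- mu i))) ->
  posdef Om.
Proof.
move=> Rm_unit TRT mu_gt0 TDT; have T_unit := unitmx_of_congr_Sigma TRT.
pose d := \row_i toC (mu i).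
have dN : \row_i toC (- mu i) = - d by apply/rowP=> i; rewrite !mxE toCN.
have OmT : Om *m T = Rm *m T *m diag_mx (row_mx d (- d)).
  by rewrite -dN -TDT !mulmxA (mulmxK T_unit) (mulmxV Rm_unit) mul1mx.
have TOmT : mxH T *m Om *m T = dup_diag d.
  by rewrite -mulmxA OmT !mulmxA TRT Sigma_pm_diag.
have -> : Om = mxH (invmx T) *m dup_diag d *m invmx T.
  by rewrite -TOmT !mulmxA -mxH_mul mulmxV // mxH1 mul1mx -mulmxA mulmxV // mulmx1.
apply: posdef_congr; first by rewrite unitmx_inv.
apply: posdef_diag_mx => k; case: (split_ordP k) => j ->;
  by rewrite ?row_mxEl ?row_mxEr mxE toC_gt0.
Qed.

Section ModeMatrices.
Variables (R : realType) (N : nat) (v L Lstar : R) (M : nat) (c : nat -> R).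
Local Notation disc := (disc v L Lstar M c).
Local Notation un := (un v L Lstar M c).
Local Notation sigma := (sigma_mx N v L Lstar M c).
Local Notation Omega := (Omega_mx N v L Lstar M c).
Hypothesis L_gt0 : 0 < L.

Lemma kn_gt0 n : (0 < n)%N -> 0 < kn L n.
Proof. by move=> n_gt0; rewrite divr_gt0 // mulr_gt0 ?ltr0n // pi_gt0. Qed.

Lemma un_ge0 n : (0 < n)%N -> 0 <= un n.
Proof. by move=> n_gt0; rewrite divr_ge0 ?sqrtr_ge0 // ltW // kn_gt0. Qed.

Lemma un_gt0 n : (0 < n)%N -> disc n != 0 -> 0 < un n.
Proof. by move=> n_gt0 dn; rewrite divr_gt0 ?kn_gt0 // sqrtr_gt0 normr_gt0. Qed.

Lemma mxconj_sigma : mxconj sigma = - sigma.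
Proof.
apply/matrixP=> i j; rewrite !mxE; case: eqP => _; last exact: conjc_itoC.
by rewrite conjc0 oppr0.
Qed.

Lemma tr_sigma : sigma^T = - sigma.
Proof.
apply/matrixP=> i j; rewrite !mxE eq_sym; case: eqP => [_|ji]; first by rewrite oppr0.
rewrite -mulrN -toCN; congr (_ * toC _).
rewrite mulnC addnC [un j.+1 * _]mulrC.
by rewrite -[((i.+1 ^ 2)%:R - _)]opprB mulrN invrN mulrN.
Qed.

Lemma mxH_sigma : mxH sigma = sigma.
Proof. by rewrite /mxH mxconj_sigma linearN /= tr_sigma opprK. Qed.

Lemma mxH_R_mx : mxH (R_mx N v L Lstar M c) = R_mx N v L Lstar M c.
Proof. by rewrite /R_mx mxHD mxHN mxH_Sigma mxH_block mxH_sigma. Qed.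

Lemma R_mx_Gamma : Gamma_mx R N *m mxconj (R_mx N v L Lstar M c) *m Gamma_mx R N
  = - R_mx N v L Lstar M c.
Proof. exact: Gamma_conj_Sigma_sub_block mxconj_sigma. Qed.

Lemma posdef_Omega_disc_gt0 : posdef Omega -> forall k : 'I_N, 0 < disc k.+1.
Proof.
move=> Opd k; apply: contraT => disc_le0.
have := posdef_pair Opd (i := lshift N k) (j := rshift N k); rewrite eq_lrshift.
rewrite /Omega_mx block_mxEul block_mxEur block_mxEdl block_mxEdr.
rewrite /rho_mx /xi_mx !mxE !eqxx !mulr1n /epsn (negbTE disc_le0) -!toCD toC_gt0.
have : 0 <= k.+1%:R * un k.+1 by rewrite mulr_ge0 ?un_ge0.
by rewrite mulr0 subr0 mulr1 => nu_ge0 /(_ isT); lra.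
Qed.

Lemma Omega_dup_diag : (forall k : 'I_N, 0 < disc k.+1) ->
  Omega = dup_diag (\row_(k < N) toC (k.+1%:R * un k.+1)).
Proof.
move=> disc_gt0; rewrite /dup_diag diag_mx_row /Omega_mx; congr block_mx.
- by congr diag_mx; apply/rowP=> k; rewrite !mxE /epsn disc_gt0 mulr1.
- by apply/matrixP=> i j; rewrite !mxE /epsn disc_gt0 subrr !mulr0 oppr0 mul0rn.
- by apply/matrixP=> i j; rewrite !mxE /epsn disc_gt0 subrr !mulr0 oppr0 mul0rn.
- by congr diag_mx; apply/rowP=> k; rewrite !mxE /epsn disc_gt0 mulr1.
Qed.

Lemma Omega_diag_gt0 : (forall k : 'I_N, 0 < disc k.+1) ->
  forall k, 0 < (\row_(k < N) toC (k.+1%:R * un k.+1)) 0 k.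
Proof. by move=> disc_gt0 k; rewrite mxE toC_gt0 mulr_gt0 ?un_gt0 ?gt_eqF. Qed.

End ModeMatrices.

Theorem lemma6 (R : realType) (N : nat) (v L Lstar : R) (M : nat) (c : nat -> R)
  (hN : (1 <= N)%N) (hv : `|v| < 1) (hL : 0 < L) (hLs : 0 <= Lstar)
  (hM : (1 <= M)%N) (hc1 : c 1%N = 1)
  (hdisc : forall n : nat, (1 <= n <= N)%N -> disc v L Lstar M c n != 0)
  (hR : R_mx N v L Lstar M c \in unitmx) :
  (exists T : 'M[R[i]]_(N + N), normal_mode_transformation N v L Lstar M c T)
  <-> posdef (Omega_mx N v L Lstar M c).
Proof.
split=> [[T [TRT _ [mu [mu_gt0 TDT]]]] | Omega_pd].
  exact: posdef_of_normal_mode hR TRT mu_gt0 TDT.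
have disc_gt0 := posdef_Omega_disc_gt0 hL Omega_pd.
have [T [TRT TG TDT]] := normal_mode_of_dup_diag (Omega_diag_gt0 hL disc_gt0)
  (mxH_R_mx N v L Lstar M c) hR (R_mx_Gamma N v L Lstar M c).
by exists T; split; rewrite // /D_mx (Omega_dup_diag disc_gt0).
Qed.
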